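(* Let $1<\alpha<\beta$ be real numbers and let $S_{\alpha,\beta}:=\{r\in\mathbb{Q}_{>0}: r\in(\beta^{-1},\alpha^{-1})\cup(\alpha,\beta)\}$. Then $$\chi(G(S_{\alpha,\beta}))\le \left\lceil \frac{\log\alpha\beta}{\log\alpha}\right\rceil.$$
   Context: For $R\subseteq\mathbb{Q}_{>0}\setminus\{1\}$, $G(R)$ is the graph with vertex set $\mathbb{N}=\{1,2,\dots\}$ and edge set $\{\{m,n\}: m/n\in R\}$. $\chi$ denotes chromatic number. *)

From HB Require Import structures.
From mathcomp Require Import all_boot all_order all_algebra.
From mathcomp Require Import reals exp.
Set Implicit Arguments. Unset Strict Implicit. Unset Printing Implicit Defensive.
Import Order.TTheory GRing.Theory Num.Theory.
Local Open Scope ring_scope.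

Definition Gedge (Rs : pred rat) (m n : nat) : Prop :=
  (0 < m)%N /\ (0 < n)%N /\ Rs (m%:Q / n%:Q).

Definition proper_coloring (Rs : pred rat) (k : nat) (c : nat -> 'I_k) : Prop :=
  forall m n : nat, Gedge Rs m n -> c m <> c n.

Definition chi_le (Rs : pred rat) (k : nat) : Prop :=
  exists c : nat -> 'I_k, proper_coloring Rs c.

Definition S_ab (R : realType) (alpha beta : R) : pred rat :=
  fun r => (0 < r) &&
    (((beta^-1 < ratr r) && (ratr r < alpha^-1)) ||
     ((alpha < ratr r) && (ratr r < beta))).

(* Colour n by the residue modulo k := ceil(log_alpha(alpha beta)) of its level
   floor(log_alpha n).  Up to swapping the endpoints, an edge {m, n} has
   alpha < m/n < beta, so log_alpha m - log_alpha n lies in (1, log_alpha beta);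
   hence the levels of m and n differ by an integer in (0, k), and two integers
   at such a distance have distinct residues modulo k. *)

From HB Require Import structures.
From mathcomp Require Import all_boot all_order all_algebra.
From mathcomp Require Import reals exp.
From mathcomp Require Import lra.
Import Order.TTheory GRing.Theory Num.Theory.
Local Open Scope ring_scope.

Lemma floorB_gt0 (R : realType) (x y : R) :
  1 <= x - y -> 0 < Num.floor x - Num.floor y.
Proof.
move=> gap; rewrite subr_gt0 -(ltr_int R).
have := floor_le y; have := floorD1_gt x; rewrite rmorphD /=; lra.
Qed.

Lemma floorB_lt_ceil (R : realType) (x y L : R) :
  x - y <= L -> Num.floor x - Num.floor y < Num.ceil (L + 1).
Proof.
move=> gap; rewrite -(ltr_int R) rmorphB /=.
have := floor_le x; have := floorD1_gt y; have := ceil_ge (L + 1).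
rewrite rmorphD /=; lra.
Qed.

Lemma modn_neq_window (a b k : nat) : (a < b < a + k)%N -> (b %% k <> a %% k)%N.
Proof.
case/andP=> lt_a_b; rewrite -(subnKC (ltnW lt_a_b)) ltn_add2l => lt_d_k /eqP.
rewrite -[X in (_ == X %% k)%N](addn0 a) eqn_modDl mod0n modn_small //.
by rewrite subn_eq0 leqNgt lt_a_b.
Qed.

Lemma S_ab_nat_ratio {R : realType} {alpha beta : R} {m n : nat} :
  0 < alpha -> 0 < beta -> (0 < m)%N -> (0 < n)%N ->
  S_ab alpha beta (m%:Q / n%:Q) ->
  alpha < m%:R / n%:R < beta \/ alpha < n%:R / m%:R < beta.
Proof.
move=> alpha_gt0 beta_gt0 m_gt0 n_gt0 /andP[_]; rewrite fmorph_div /= !ratr_nat.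
have mn_gt0 : (0 : R) < m%:R / n%:R by rewrite divr_gt0 ?ltr0n.
case/orP=> /andP[lo hi]; last by left; rewrite lo hi.
right.
rewrite -invf_div; apply/andP; split.
- by rewrite -[alpha]invrK ltf_pV2 ?posrE ?invr_gt0.
- by rewrite -[beta]invrK ltf_pV2 ?posrE ?invr_gt0.
Qed.

Section LogLevel.
Variables (R : realType) (alpha : R).
Hypothesis alpha_gt1 : 1 < alpha.

Definition floor_log (x : R) : int := Num.floor (ln x / ln alpha).

Let alpha_gt0 : 0 < alpha. Proof. exact: lt_trans ltr01 alpha_gt1. Qed.
Let ln_alpha_gt0 : 0 < ln alpha. Proof. exact: ln_gt0. Qed.

Lemma floor_log_nat_ge0 (n : nat) : (0 < n)%N -> 0 <= floor_log n%:R.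
Proof.
move=> n_gt0; rewrite floor_ge0 divr_ge0 ?ln_ge0 ?ler1n //.
exact: ltW.
Qed.

Lemma floor_log_gap {beta x y : R} : 0 < y -> alpha < x / y < beta ->
  0 < floor_log x - floor_log y < Num.ceil (ln (alpha * beta) / ln alpha).
Proof.
move=> y_gt0 /andP[lo hi].
have xy_gt0 : 0 < x / y := lt_trans alpha_gt0 lo.
have beta_gt0 : 0 < beta := lt_trans xy_gt0 hi.
have x_gt0 : 0 < x by rewrite -(divfK (lt0r_neq0 y_gt0) x) mulr_gt0.
have ln_gap : ln alpha < ln x - ln y < ln beta.
  by rewrite -ln_div ?posrE // !ltr_ln ?posrE // lo hi.
rewrite /floor_log lnM ?posrE // mulrDl divff ?gt_eqF // [1 + _]addrC.
apply/andP; split; [apply: floorB_gt0 | apply: floorB_lt_ceil];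
  rewrite -mulrBl.
- by rewrite ler_pdivlMr // mul1r; lra.
- by rewrite ler_pM2r ?invr_gt0 //; lra.
Qed.

Lemma floor_log_nat_residues_neq (beta : R) (m n : nat) : (0 < n)%N ->
  alpha < m%:R / n%:R < beta ->
  let k := `|Num.ceil (ln (alpha * beta) / ln alpha)|%N in
  (`|floor_log m%:R|%N %% k)%N <> (`|floor_log n%:R|%N %% k)%N.
Proof.
move=> n_gt0 ratio k; apply: modn_neq_window.
have m_gt0 : (0 < m)%N.
  have /andP[/(lt_trans alpha_gt0) mn_gt0 _] := ratio.
  by rewrite pmulr_lgt0 ?invr_gt0 ?ltr0n in mn_gt0.
have n_pos : (0 : R) < n%:R by rewrite ltr0n.
have /andP[lo hi] := floor_log_gap n_pos ratio.
rewrite -!ltz_nat PoszD !gez0_abs ?floor_log_nat_ge0 //; last by lra.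
by rewrite -subr_gt0 lo -ltrBlDl.
Qed.

End LogLevel.

Arguments floor_log {R}.

Theorem proposition2p2 (R : realType) (alpha beta : R) :
  1 < alpha -> alpha < beta ->
  chi_le (S_ab alpha beta) `|Num.ceil (ln (alpha * beta) / ln alpha)|%N.
Proof.
move=> alpha_gt1 alpha_lt_beta.
set k := `|_|%N.
have k_gt0 : (0 < k)%N.
  rewrite -ltz_nat gtz0_abs ceil_gt0 ?divr_gt0 ?ln_gt0 //; nra.
exists (fun n => Ordinal (ltn_pmod `|floor_log alpha n%:R|%N k_gt0)).
move=> m n [m_gt0 [n_gt0 edge]] /(congr1 val) /= same.
have alpha_gt0 : 0 < alpha by lra.
have beta_gt0 : 0 < beta by lra.
have [ratio_mn | ratio_nm] := S_ab_nat_ratio alpha_gt0 beta_gt0 m_gt0 n_gt0 edge.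
- exact: floor_log_nat_residues_neq ratio_mn same.
- exact: floor_log_nat_residues_neq ratio_nm (esym same).
Qed.
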